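(* (1) Every (unpointed) endomorphism of $\mathbf{P}^1_k$ is unpointed naively homotopic to a pointed one. (2) Let $f,g$ be pointed rational functions. Then $f\overset{\mathrm{u}}{\sim}g$ if and only if there exists $\lambda\in k^\times$ with $f\overset{\mathrm{p}}{\sim}\lambda^2g$.
   Context: Let $k$ be a field. An (unpointed) endomorphism of $\mathbf{P}^1_k$ of degree $n$ is given by a pair $(A,B)$ of polynomials of degree $\le n$ in $k[X]$ with $\mathrm{res}_{n,n}(A,B)\neq0$, up to a common scalar (a $k$-point of the open subscheme $\mathscr{U}_n\subset\mathbf{P}^{2n+1}$ complementary to the resultant hypersurface); an unpointed naive homotopy is a $k[T]$-point of $\mathscr{U}_n$, and $\overset{\mathrm{u}}{\sim}$ is the equivalence relation generated by $F(0)\sim F(1)$. A pointed rational function (base point $\infty=[1:0]$ fixed) of degree $n$ is a pair $\frac{A}{B}$ with $A$ monic of degree $n$, $\deg B<n$ and $\mathrm{res}_{n,n}(A,B)$ invertible; pointed naive homotopies are such pairs over $k[T]$, and $\overset{\mathrm{p}}{\sim}$ is the equivalence relation they generate. For $g=\frac{A}{B}$ pointed, $\lambda^2g$ is the pointed rational function $\frac{A}{\lambda^{-2}B}$. *)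

From HB Require Import structures.
From mathcomp Require Import all_boot all_order all_algebra.
Set Implicit Arguments. Unset Strict Implicit. Unset Printing Implicit Defensive.
Import GRing.Theory.
Local Open Scope ring_scope.

(* res_{n,n}(A,B): determinant of the (transposed) Sylvester matrix of A, B
   viewed as polynomials of FORMAL degree n (rows: X^i*A, X^i*B for i < n,
   columns: coefficients of X^0..X^(2n-1)).  Agrees with res_{n,n} up to sign. *)
Definition resnn (R : comUnitRingType) (n : nat) (A B : {poly R}) : R :=
  \det (\matrix_(i < n + n, j < n + n)
          match split i with
          | inl i' => ('X^i' * A)`_j
          | inr i' => ('X^i' * B)`_j
          end).

(* the 2n+2 coefficients of (A,B) generate the unit ideal
   (a point of P^{2n+1} over R, R = k or k[T]) *)
Definition unimodular (R : comUnitRingType) (n : nat) (A B : {poly R}) : Prop :=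
  exists u v : nat -> R, \sum_(i < n.+1) (u i * A`_i + v i * B`_i) = 1.

(* (A,B) is an R-point of U_n (unpointed endomorphism of degree n over R) *)
Definition Upoint (R : comUnitRingType) (n : nat) (A B : {poly R}) : Prop :=
  [/\ (size A <= n.+1)%N, (size B <= n.+1)%N, unimodular n A B
    & resnn n A B \is a GRing.unit].

(* A/B is a pointed rational function of degree n over R *)
Definition Ppoint (R : comUnitRingType) (n : nat) (A B : {poly R}) : Prop :=
  [/\ A \is monic, size A = n.+1, (size B <= n)%N
    & resnn n A B \is a GRing.unit].

Definition evT (k : fieldType) (t : k) (A : {poly {poly k}}) : {poly k} :=
  map_poly (fun p : {poly k} => p.[t]) A.

Inductive eqclos (T : Type) (R : T -> T -> Prop) : T -> T -> Prop :=
| ec_step x y : R x y -> eqclos R x y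
| ec_refl x : eqclos R x x
| ec_sym x y : eqclos R x y -> eqclos R y x
| ec_trans x y z : eqclos R x y -> eqclos R y z -> eqclos R x z.

(* generators of unpointed naive homotopy on representatives (A,B);
   scaling identifies representatives of the same point of P^{2n+1} *)
Inductive usim_step (k : fieldType) (n : nat) :
  {poly k} * {poly k} -> {poly k} * {poly k} -> Prop :=
| us_scale (A B : {poly k}) (c : k) :
    Upoint n A B -> c != 0 -> usim_step n (A, B) (c *: A, c *: B)
| us_homot (FA FB : {poly {poly k}}) :
    Upoint n FA FB -> usim_step n (evT 0 FA, evT 0 FB) (evT 1 FA, evT 1 FB).

Definition usim (k : fieldType) (n : nat) := eqclos (@usim_step k n).

Inductive psim_step (k : fieldType) (n : nat) :
  {poly k} * {poly k} -> {poly k} * {poly k} -> Prop :=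
| ps_homot (FA FB : {poly {poly k}}) :
    Ppoint n FA FB -> psim_step n (evT 0 FA, evT 0 FB) (evT 1 FA, evT 1 FB).

Definition psim (k : fieldType) (n : nat) := eqclos (@psim_step k n).

From mathcomp Require Import all_boot all_order all_algebra.
From mathcomp Require Import ring zify.
Import GRing.Theory.
Local Open Scope ring_scope.
Set Implicit Arguments. Unset Strict Implicit. Unset Printing Implicit Defensive.

(* SL_2(k) acts on representatives by (A, B) |-> (aA + bB, cA + dB); this preserves U_n
   because the Sylvester matrix gets multiplied by a block matrix of determinant
   (ad - bc)^n.  Shears are joined to the identity by the homotopies [1 cT; 0 1], and
   SL_2(k) is generated by shears, so SL_2(k) acts trivially up to ~u.  Over any ring the
   leading coefficients (A_n, B_n) of a point of U_n generate the unit ideal, so an element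
   of SL_2 makes the point pointed: this gives (1).
   For (2), two pointed translates M x, M' x of the same point differ by some
   [1 b; 0 mu^2], which is the pointed shear [1 b; 0 1] followed by the rescaling by mu.
   Hence "all pointed SL_2-translates of x and y agree up to ~p and a factor lam^2" is
   invariant under ~u; for a homotopy F one normalises F itself over k[T].  Conversely ~p
   implies ~u, and g ~u lam^2 g via diag(lam, lam^-1) and the scalar lam^-1. *)

Section Action.
Variable R : comUnitRingType.
Implicit Types (A B P : {poly R}) (p : {poly R} * {poly R}).

Definition mxact (a b c d : R) p : {poly R} * {poly R} :=
  (a *: p.1 + b *: p.2, c *: p.1 + d *: p.2).

Definition Upair n p := Upoint n p.1 p.2.
Definition Ppair n p := Ppoint n p.1 p.2.

Lemma mxact_comp (a b c d a' b' c' d' : R) p :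
  mxact a b c d (mxact a' b' c' d' p) =
  mxact (a * a' + b * c') (a * b' + b * d') (c * a' + d * c') (c * b' + d * d') p.
Proof.
by rewrite /mxact /=; congr pair; rewrite !scalerDr !scalerA !scalerDl addrACA.
Qed.

Lemma mxact1 p : mxact 1 0 0 1 p = p.
Proof. by case: p => A B; rewrite /mxact /= !scale1r !scale0r addr0 add0r. Qed.

Lemma coef_lin (a b : R) A B i : (a *: A + b *: B)`_i = a * A`_i + b * B`_i.
Proof. by rewrite coefD !coefZ. Qed.

Lemma size_lin_le n (a b : R) A B : (size A <= n)%N -> (size B <= n)%N ->
  (size (a *: A + b *: B)%R <= n)%N.
Proof.
move=> sA sB; apply: leq_trans (size_polyD _ _) _; rewrite geq_max.
by rewrite !(leq_trans (size_scale_leq _ _)).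
Qed.

Definition sylvester_half n A : 'M[R]_(n, n + n) :=
  \matrix_(i < n, j < n + n) ('X^i * A)`_j.

Lemma resnn_det n A B :
  resnn n A B = \det (col_mx (sylvester_half n A) (sylvester_half n B)).
Proof.
congr (\det _); apply/matrixP => i j; rewrite !mxE.
by case: split => i'; rewrite mxE.
Qed.

Lemma sylvester_half_lin n (a b : R) A B :
  sylvester_half n (a *: A + b *: B) = a *: sylvester_half n A + b *: sylvester_half n B.
Proof. by apply/matrixP => i j; rewrite !mxE mulrDr -!scalerAr coef_lin. Qed.

Lemma unit_det_scalar_block n (a b c d : R) : a * d - b * c \is a GRing.unit ->
  \det (block_mx a%:M b%:M c%:M d%:M : 'M_(n + n)) \is a GRing.unit.
Proof.
move=> unit_det.
have adj : block_mx a%:M b%:M c%:M d%:M *m block_mx d%:M (- b)%:M (- c)%:M a%:M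
           = (a * d - b * c)%:M :> 'M_(n + n).
  rewrite mulmx_block -!scalar_mxM -!raddfD /= (scalar_mx_block n n).
  rewrite -(raddf0 (@scalar_mx R n)); congr block_mx; congr (_%:M); ring.
have := unitrX (n + n) unit_det; rewrite -det_scalar -adj det_mulmx unitrM.
by case/andP.
Qed.

Lemma resnn_mxact_unit n (a b c d : R) p : a * d - b * c \is a GRing.unit ->
  resnn n p.1 p.2 \is a GRing.unit ->
  resnn n (mxact a b c d p).1 (mxact a b c d p).2 \is a GRing.unit.
Proof.
move=> unit_det unit_res; rewrite resnn_det !sylvester_half_lin -mul_scalar_mx.
rewrite -(mul_scalar_mx b) -(mul_scalar_mx c) -(mul_scalar_mx d) -mul_block_col.
by rewrite det_mulmx unitrM unit_det_scalar_block // -resnn_det.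
Qed.

Lemma unimodular_mxact n (a b c d : R) p : a * d - b * c \is a GRing.unit ->
  unimodular n p.1 p.2 -> unimodular n (mxact a b c d p).1 (mxact a b c d p).2.
Proof.
move=> unit_det [u [v uv1]]; set D := a * d - b * c.
exists (fun i => D^-1 * (u i * d - v i * c)), (fun i => D^-1 * (v i * a - u i * b)).
rewrite -[RHS]uv1 -[RHS]mul1r -(mulVr unit_det) -mulrA !mulr_sumr.
by apply: eq_bigr => i _; rewrite /= !coef_lin /D; ring.
Qed.

Lemma Upair_mxact n (a b c d : R) p : a * d - b * c \is a GRing.unit ->
  Upair n p -> Upair n (mxact a b c d p).
Proof.
move=> unit_det [sA sB unimod unit_res]; split; rewrite ?size_lin_le //.
  exact: unimodular_mxact.
exact: resnn_mxact_unit.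
Qed.

Lemma PpairP n p : Ppair n p <->
  [/\ (size p.1 <= n.+1)%N, p.1`_n = 1, (size p.2 <= n.+1)%N, p.2`_n = 0
    & resnn n p.1 p.2 \is a GRing.unit].
Proof.
case: p => A B /=; split.
  case=> /monicP lA sA sB unit_res; rewrite lead_coefE sA in lA.
  by rewrite sA leqnn ltnW //; split=> //; apply/leq_sizeP: sB.
case=> sA A1 sB B0 unit_res.
have sA' : size A = n.+1.
  apply/eqP; rewrite eqn_leq sA ltnNge; apply/negP => /leq_sizeP/(_ n (leqnn n)).
  by rewrite A1 => /eqP; rewrite oner_eq0.
split=> //; first by apply/monicP; rewrite lead_coefE sA'.
apply/leq_sizeP => j; rewrite leq_eqVlt => /predU1P[<- //|].
exact/leq_sizeP.
Qed.

Lemma Upair_of_Ppair n p : Ppair n p -> Upair n p.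
Proof.
move=> /PpairP[sA A1 sB B0 unit_res]; split=> //.
exists (fun i => (i == n)%:R), (fun=> 0).
rewrite big_ord_recr /= eqxx A1 B0 big1 ?add0r => [|i _].
  by rewrite mulr1 mul0r addr0.
by rewrite /= (ltn_eqF (ltn_ord i)) !mul0r addr0.
Qed.

Lemma coefXnM_last m P i : (size P <= m.+2)%N -> (i <= m)%N ->
  ('X^i * P)`_(m.+1 + m) = if i == m then P`_m.+1 else 0.
Proof.
move=> sP lt_i_m; rewrite coefXnM ltnNge (leq_trans lt_i_m) ?leq_addl //=.
case: eqP => [->|ne_i_m]; first by rewrite addnK.
by move/leq_sizeP: sP; apply; lia.
Qed.

(* Expanding the resultant along its last column shows it lies in the ideal (A_n, B_n). *)
Lemma Upair_lead_unimodular n p : Upair n p ->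
  exists u v : R, u * p.1`_n + v * p.2`_n = 1.
Proof.
case: p => A B [/= sA sB [u [v uv1]] unit_res].
case: n sA sB u v uv1 unit_res => [|m] sA sB u v uv1 unit_res.
  by exists (u 0%N), (v 0%N); rewrite -uv1 big_ord1.
have lt_last : (m.+1 + m < m.+1 + m.+1)%N by rewrite addnS.
move: unit_res; rewrite resnn_det.
set S := col_mx (sylvester_half _ A) (sylvester_half _ B).
rewrite (expand_det_col _ (Ordinal lt_last)) big_split_ord /=.
have last_col P i : (size P <= m.+2)%N ->
    sylvester_half m.+1 P i (Ordinal lt_last) = if i == ord_max then P`_m.+1 else 0.
  by move=> sP; rewrite mxE (coefXnM_last sP (ltn_ord i)).
have col_A i : S (lshift m.+1 i) (Ordinal lt_last) = if i == ord_max then A`_m.+1 else 0.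
  by rewrite col_mxEu last_col.
have col_B i : S (rshift m.+1 i) (Ordinal lt_last) = if i == ord_max then B`_m.+1 else 0.
  by rewrite col_mxEd last_col.
rewrite !big_ord_recr /= !col_A !col_B !eqxx !big1 ?add0r => [|i _|i _].
- set r := _ + _ => unit_r.
  exists (r^-1 * cofactor S (lshift m.+1 ord_max) (Ordinal lt_last)).
  exists (r^-1 * cofactor S (rshift m.+1 ord_max) (Ordinal lt_last)).
  by rewrite -(mulVr unit_r) /r; ring.
- by rewrite col_B -(inj_eq val_inj) /= ltn_eqF ?mul0r.
- by rewrite col_A -(inj_eq val_inj) /= ltn_eqF ?mul0r.
Qed.

Lemma Ppair_mxact_upper n p (b d : R) : d \is a GRing.unit -> Ppair n p ->
  Ppair n (mxact 1 b 0 d p).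
Proof.
move=> unit_d /PpairP[sA A1 sB B0 unit_res]; apply/PpairP; split.
- exact: size_lin_le.
- by rewrite coef_lin A1 B0; ring.
- exact: size_lin_le.
- by rewrite coef_lin A1 B0; ring.
- by apply: resnn_mxact_unit; rewrite // mul1r mulr0 subr0.
Qed.

Lemma Upair_normalisable n p : Upair n p ->
  exists a b c d : R, a * d - b * c = 1 /\ Ppair n (mxact a b c d p).
Proof.
move=> Up; have [u [v uv1]] := Upair_lead_unimodular Up.
have [sA sB _ unit_res] := Up.
have det1 : u * p.1`_n - v * - p.2`_n = 1 by rewrite -uv1; ring.
exists u, v, (- p.2`_n), p.1`_n; split=> //; apply/PpairP.
rewrite /= !size_lin_le // !coef_lin uv1 resnn_mxact_unit ?det1 ?unitr1 //.
by split=> //; ring.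
Qed.

End Action.

Section MapPair.
Variables (R S : comUnitRingType) (f : {rmorphism R -> S}).

Definition map_pair (p : {poly R} * {poly R}) := (map_poly f p.1, map_poly f p.2).

Lemma resnn_map n A B : resnn n (map_poly f A) (map_poly f B) = f (resnn n A B).
Proof.
rewrite /resnn -det_map_mx; congr (\det _); apply/matrixP => i j; rewrite !mxE.
by case: split => i'; rewrite -(map_polyXn f) -rmorphM coef_map.
Qed.

Lemma Upair_map n p : Upair n p -> Upair n (map_pair p).
Proof.
case=> sA sB [u [v uv1]] unit_res; split.
- exact: leq_trans (size_poly _ _) sA.
- exact: leq_trans (size_poly _ _) sB.
- exists (f \o u), (f \o v); rewrite -(rmorph1 f) -uv1 rmorph_sum.
  by apply: eq_bigr => i _; rewrite !coef_map rmorphD !rmorphM.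
- by rewrite resnn_map rmorph_unit.
Qed.

Lemma Ppair_map n p : Ppair n p -> Ppair n (map_pair p).
Proof.
move=> /PpairP[sA A1 sB B0 unit_res]; apply/PpairP; rewrite /map_pair /=; split.
- exact: leq_trans (size_poly _ _) sA.
- by rewrite coef_map A1; apply: rmorph1.
- exact: leq_trans (size_poly _ _) sB.
- by rewrite coef_map B0; apply: rmorph0.
- by rewrite resnn_map rmorph_unit.
Qed.

Lemma map_pair_mxact a b c d p :
  map_pair (mxact a b c d p) = mxact (f a) (f b) (f c) (f d) (map_pair p).
Proof. by rewrite /map_pair /mxact /=; congr pair; rewrite rmorphD /= !map_polyZ. Qed.

End MapPair.

Section Homotopy.
Variable k : fieldType.
Implicit Types (p x y z : {poly k} * {poly k}) (F : {poly {poly k}} * {poly {poly k}}).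

Definition constpair p := map_pair (polyC : {rmorphism k -> {poly k}}) p.
Definition evpair (t : k) F := (evT t F.1, evT t F.2).

Lemma evpairE t F : evpair t F = map_pair (horner_eval t) F.
Proof. by []. Qed.

Lemma evpair_const t p : evpair t (constpair p) = p.
Proof.
case: p => A B; rewrite evpairE /constpair /map_pair /=.
by congr pair; apply/polyP => i; rewrite !coef_map /= horner_evalE hornerC.
Qed.

Lemma evpair_mxact t (a b c d : {poly k}) F :
  evpair t (mxact a b c d F) = mxact a.[t] b.[t] c.[t] d.[t] (evpair t F).
Proof. by rewrite !evpairE map_pair_mxact. Qed.

Lemma Upair_ev n t F : Upair n F -> Upair n (evpair t F).
Proof. by rewrite evpairE; apply: Upair_map. Qed.

Lemma usim_homotopy n F : Upair n F -> usim n (evpair 0 F) (evpair 1 F).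
Proof. by move=> UF; apply/ec_step/us_homot. Qed.

Lemma psim_homotopy n F : Ppair n F -> psim n (evpair 0 F) (evpair 1 F).
Proof. by move=> PF; apply/ec_step/ps_homot. Qed.

Lemma usim_mxact_path n p (a b c d : {poly k}) : Upair n p ->
  a * d - b * c \is a GRing.unit ->
  usim n (mxact a.[0] b.[0] c.[0] d.[0] p) (mxact a.[1] b.[1] c.[1] d.[1] p).
Proof.
move=> Up unit_det; rewrite -[p in mxact _ _ _ _ p](evpair_const 0).
rewrite -[p in usim _ _ (mxact _ _ _ _ p)](evpair_const 1) -!evpair_mxact.
by apply/usim_homotopy/Upair_mxact/Upair_map.
Qed.

Lemma usim_shear_upper n p (c : k) : Upair n p -> usim n p (mxact 1 c 0 1 p).
Proof.
move=> Up; have := usim_mxact_path (a := 1) (b := c%:P * 'X) (c := 0) (d := 1) Up.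
by rewrite !hornerE mxact1 subr0; apply; apply: unitr1.
Qed.

Lemma usim_shear_lower n p (c : k) : Upair n p -> usim n p (mxact 1 0 c 1 p).
Proof.
move=> Up; have := usim_mxact_path (a := 1) (b := 0) (c := c%:P * 'X) (d := 1) Up.
by rewrite !hornerE mxact1 subr0; apply; apply: unitr1.
Qed.

Lemma Upair_SL2 n p (a b c d : k) : a * d - b * c = 1 -> Upair n p ->
  Upair n (mxact a b c d p).
Proof. by move=> det1; apply: Upair_mxact; rewrite det1 unitr1. Qed.

(* [a b; c d] = [1 x; 0 1] [1 0; c 1] [1 z; 0 1] with x = (a - 1)/c, z = (d - 1)/c. *)
Lemma usim_SL2_lower_neq0 n p (a b c d : k) : a * d - b * c = 1 -> c != 0 ->
  Upair n p -> usim n p (mxact a b c d p).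
Proof.
move=> det1 c_neq0 Up; set x := (a - 1) / c; set z := (d - 1) / c.
have Up1 : Upair n (mxact 1 z 0 1 p) by apply: Upair_SL2 => //; ring.
have Up2 : Upair n (mxact 1 0 c 1 (mxact 1 z 0 1 p)) by apply: Upair_SL2 => //; ring.
have -> : mxact a b c d p = mxact 1 x 0 1 (mxact 1 0 c 1 (mxact 1 z 0 1 p)).
  have b_eq : b = (a * d - 1) / c by rewrite -det1; field.
  by rewrite !mxact_comp /x /z b_eq; congr mxact; field.
apply: ec_trans (usim_shear_upper _ Up) _.
exact: ec_trans (usim_shear_lower _ Up1) (usim_shear_upper _ Up2).
Qed.

Lemma usim_SL2 n p (a b c d : k) : a * d - b * c = 1 -> Upair n p ->
  usim n p (mxact a b c d p).
Proof.
move=> det1 Up; have [c0|c_neq0] := eqVneq c 0; last exact: usim_SL2_lower_neq0.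
have Up1 : Upair n (mxact 1 0 1 1 p) by apply: Upair_SL2 => //; ring.
have -> : mxact a b c d p = mxact (a - b) b (- d) d (mxact 1 0 1 1 p).
  by rewrite mxact_comp c0; congr mxact; ring.
apply: ec_trans (usim_shear_lower _ Up) (usim_SL2_lower_neq0 _ _ Up1).
  by rewrite -det1 c0; ring.
rewrite oppr_eq0; apply/eqP => d0; move/eqP: det1.
by rewrite c0 d0 !mulr0 subr0 eq_sym oner_eq0.
Qed.

Definition rescale (lam : k) p := (p.1, lam ^- 2 *: p.2).

Lemma rescale_mxact lam p : rescale lam p = mxact 1 0 0 (lam ^- 2) p.
Proof. by case: p => A B; rewrite /rescale /mxact /= !scale1r !scale0r addr0 add0r. Qed.

Lemma rescale1 p : rescale 1 p = p.
Proof. by case: p => A B; rewrite /rescale /= expr1n invr1 scale1r. Qed.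

Lemma rescaleM lam mu p : rescale lam (rescale mu p) = rescale (lam * mu) p.
Proof. by rewrite /rescale /= scalerA [in RHS]exprMn [in RHS]invfM. Qed.

Lemma psim_shear n p (b : k) : Ppair n p -> psim n p (mxact 1 b 0 1 p).
Proof.
move=> Pp; have := @psim_homotopy n (mxact 1 (b%:P * 'X) 0 1 (constpair p)).
rewrite !evpair_mxact !evpair_const !hornerE mxact1; apply.
by apply: Ppair_mxact_upper; [apply: unitr1 | apply: Ppair_map].
Qed.

(* Only matrices [1 b; 0 mu^2] keep p pointed, and rescaling by mu turns them into
   the shear [1 b; 0 1]. *)
Lemma psim_Ppair_mxact n p (a b c d mu : k) : Ppair n p ->
  Ppair n (mxact a b c d p) -> a * d - b * c = mu ^+ 2 -> mu != 0 ->
  psim n p (rescale mu (mxact a b c d p)).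
Proof.
move=> Pp /PpairP[_ + _ + _] + mu_neq0; have /PpairP[_ A1 _ B0 _] := Pp.
rewrite /= !coef_lin A1 B0 !mulr0 !mulr1 !addr0 => -> ->.
rewrite mul1r mulr0 subr0 => ->.
have -> : rescale mu (mxact 1 b 0 (mu ^+ 2) p) = mxact 1 b 0 1 p.
  by rewrite rescale_mxact mxact_comp mulVf ?expf_neq0 //; congr mxact; ring.
exact: psim_shear.
Qed.

Lemma psim_normalisations n x (a b c d a' b' c' d' mu : k) :
  a * d - b * c = 1 -> a' * d' - b' * c' = mu ^+ 2 -> mu != 0 ->
  Ppair n (mxact a b c d x) -> Ppair n (mxact a' b' c' d' x) ->
  psim n (mxact a b c d x) (rescale mu (mxact a' b' c' d' x)).
Proof.
move=> det1 det_sq mu_neq0 Px Px'.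
have E : mxact a' b' c' d' x = mxact (a' * d - b' * c) (b' * a - a' * b)
   (c' * d - d' * c) (d' * a - c' * b) (mxact a b c d x).
  by rewrite mxact_comp; congr mxact; rewrite -[LHS]mulr1 -det1; ring.
rewrite E; apply: psim_Ppair_mxact; rewrite -?E //.
by rewrite -det_sq -[RHS]mulr1 -det1; ring.
Qed.

Lemma psim_rescale n p q mu : mu != 0 -> psim n p q ->
  psim n (rescale mu p) (rescale mu q).
Proof.
move=> mu_neq0; elim=> {p q} [_ _ [FA FB PF]||p q _|p q r _ IHpq _ IHqr].
- have := @psim_homotopy n (mxact 1 0 0 (mu ^- 2)%:P (FA, FB)).
  rewrite !evpair_mxact !hornerE -!rescale_mxact; apply.
  apply: (Ppair_mxact_upper 0 _ (PF : Ppair n (FA, FB))).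
  by rewrite rmorph_unit // unitfE invr_eq0 expf_neq0.
- by move=> x; apply: ec_refl.
- exact: ec_sym.
- exact: ec_trans IHpq IHqr.
Qed.

Definition pointed_equiv n x y :=
  forall a b c d a' b' c' d' : k, a * d - b * c = 1 -> a' * d' - b' * c' = 1 ->
    Ppair n (mxact a b c d x) -> Ppair n (mxact a' b' c' d' y) ->
    exists2 lam : k, lam != 0 &
      psim n (mxact a b c d x) (rescale lam (mxact a' b' c' d' y)).

Lemma pointed_equiv_refl n x : pointed_equiv n x x.
Proof.
move=> a b c d a' b' c' d' det1 det1' Px Px'; exists 1; first exact: oner_neq0.
by apply: psim_normalisations; rewrite ?expr1n ?oner_neq0.
Qed.

Lemma pointed_equiv_sym n x y : pointed_equiv n x y -> pointed_equiv n y x.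
Proof.
move=> Exy a b c d a' b' c' d' det1 det1' Py Px.
have [lam lam_neq0 pxy] := Exy _ _ _ _ _ _ _ _ det1' det1 Px Py.
exists lam^-1; first by rewrite invr_eq0.
apply: ec_sym; have := psim_rescale (invr_neq0 lam_neq0) pxy.
by rewrite rescaleM mulVf // rescale1.
Qed.

Lemma pointed_equiv_trans n x y z : Upair n y ->
  pointed_equiv n x y -> pointed_equiv n y z -> pointed_equiv n x z.
Proof.
move=> Uy Exy Eyz a b c d a' b' c' d' det1 det1' Px Pz.
have [e [f [g [h [det1'' Py]]]]] := Upair_normalisable Uy.
have [l1 l1_neq0 pxy] := Exy _ _ _ _ _ _ _ _ det1 det1'' Px Py.
have [l2 l2_neq0 pyz] := Eyz _ _ _ _ _ _ _ _ det1'' det1' Py Pz.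
exists (l1 * l2); first by rewrite mulf_neq0.
by apply: ec_trans pxy _; rewrite -rescaleM; apply: psim_rescale.
Qed.

Lemma usim_step_Upair n x y : usim_step n x y -> Upair n x /\ Upair n y.
Proof.
case=> [A B c UAB c_neq0 | FA FB UF].
  split=> //; have -> : (c *: A, c *: B) = mxact c 0 0 c (A, B).
    by rewrite /mxact /= !scale0r addr0 add0r.
  by apply: Upair_mxact; rewrite // mulr0 subr0 unitfE mulf_neq0.
by split; apply: (Upair_ev _ (UF : Upair n (FA, FB))).
Qed.

Lemma usim_Upair n x y : usim n x y -> x = y \/ Upair n x /\ Upair n y.
Proof.
elim=> {x y} [x y /usim_step_Upair|x|x y _ [->|[]]|x y z _ [->|[Ux Uy]] _ [<-|[Uy' Uz]]];
  by [left | right].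
Qed.

(* A homotopy F is normalised over k[T]; the ends of the normalised F are pointed
   translates of F(0) and F(1), joined by a pointed homotopy. *)
Lemma pointed_equiv_usim_step n x y : usim_step n x y -> pointed_equiv n x y.
Proof.
case=> [A B s UAB s_neq0 | FA FB UF] a b c d a' b' c' d' det1 det1' Px Py.
  have scaled : mxact a' b' c' d' (s *: A, s *: B)
                = mxact (a' * s) (b' * s) (c' * s) (d' * s) (A, B).
    by rewrite /mxact /= !scalerA.
  exists s => //; rewrite scaled.
  apply: psim_normalisations => //; last by rewrite -scaled.
  by rewrite -[RHS]mulr1 -det1'; ring.
have UF' : Upair n (FA, FB) := UF.
have [e [f [g [h [detF PF]]]]] := Upair_normalisable UF'.
have det_ev t : e.[t] * h.[t] - f.[t] * g.[t] = 1.
  by have := congr1 (horner^~ t) detF; rewrite !hornerE.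
have PF_ev t : Ppair n (mxact e.[t] f.[t] g.[t] h.[t] (evpair t (FA, FB))).
  by rewrite -evpair_mxact evpairE; apply: Ppair_map.
have det1'_sq : a' * d' - b' * c' = 1 ^+ 2 by rewrite det1' expr1n.
have det_ev0_sq : e.[0] * h.[0] - f.[0] * g.[0] = 1 ^+ 2 by rewrite det_ev expr1n.
have p0 := psim_normalisations det1 det_ev0_sq (oner_neq0 k) Px (PF_ev 0).
have p1 := psim_normalisations (det_ev 1) det1'_sq (oner_neq0 k) (PF_ev 1) Py.
have hom := psim_homotopy PF; rewrite !evpair_mxact in hom.
rewrite !rescale1 in p0 p1; exists 1; rewrite ?oner_neq0 // rescale1.
exact: ec_trans p0 (ec_trans hom p1).
Qed.

Lemma usim_pointed_equiv n x y : usim n x y -> pointed_equiv n x y.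
Proof.
elim=> {x y} [x y /pointed_equiv_usim_step //|x|x y _|x y z uxy Exy _ Eyz].
- exact: pointed_equiv_refl.
- exact: pointed_equiv_sym.
have [exy|[_ Uy]] := usim_Upair uxy; first by rewrite exy.
exact: pointed_equiv_trans Uy Exy Eyz.
Qed.

Lemma psim_usim n x y : psim n x y -> usim n x y.
Proof.
elim=> {x y} [_ _ [FA FB PF]|x|x y _|x y z _ uxy _ uyz].
- exact: usim_homotopy (Upair_of_Ppair (PF : Ppair n (FA, FB))).
- exact: ec_refl.
- exact: ec_sym.
- exact: ec_trans uxy uyz.
Qed.

(* rescale lam p = lam^-1 (diag(lam, lam^-1) p), a scalar multiple of an SL_2-translate. *)
Lemma usim_rescale n p lam : Upair n p -> lam != 0 -> usim n p (rescale lam p).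
Proof.
move=> Up lam_neq0; have det1 : lam * lam^-1 - 0 * 0 = 1 by rewrite mulr0 subr0 mulfV.
apply: ec_trans (usim_SL2 det1 Up) (ec_step _).
have -> : rescale lam p =
    (lam^-1 *: (mxact lam 0 0 lam^-1 p).1, lam^-1 *: (mxact lam 0 0 lam^-1 p).2).
  rewrite rescale_mxact /mxact /= !scale0r !addr0 !add0r !scalerA mulVf //.
  by rewrite expr2 invfM.
by apply: us_scale; [apply: Upair_SL2 | rewrite invr_eq0].
Qed.

End Homotopy.

Theorem lemma4p4 (k : fieldType) (n : nat) :
  (forall A B : {poly k}, Upoint n A B ->
     exists A' B' : {poly k}, Ppoint n A' B' /\ usim n (A, B) (A', B')) /\
  (forall fA fB gA gB : {poly k}, Ppoint n fA fB -> Ppoint n gA gB ->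
     (usim n (fA, fB) (gA, gB) <->
      exists lam : k, lam != 0 /\ psim n (fA, fB) (gA, lam ^- 2 *: gB))).
Proof.
split=> [A B UAB | fA fB gA gB Pf Pg].
  have [a [b [c [d [det1 P]]]]] := Upair_normalisable (UAB : Upair n (A, B)).
  exists (mxact a b c d (A, B)).1, (mxact a b c d (A, B)).2; split=> //.
  by rewrite -surjective_pairing; apply: usim_SL2.
have id1 : (1 : k) * 1 - 0 * 0 = 1 by rewrite mulr1 mulr0 subr0.
split=> [/usim_pointed_equiv Efg | [lam [lam_neq0 pfg]]].
  have Pf' : Ppair n (mxact 1 0 0 1 (fA, fB)) by rewrite mxact1.
  have Pg' : Ppair n (mxact 1 0 0 1 (gA, gB)) by rewrite mxact1.
  have [lam lam_neq0] := Efg _ _ _ _ _ _ _ _ id1 id1 Pf' Pg'.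
  by rewrite !mxact1; exists lam.
have Ug : Upair n (gA, gB) by apply: Upair_of_Ppair.
exact: ec_trans (psim_usim pfg) (ec_sym (usim_rescale Ug lam_neq0)).
Qed.
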